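(* Let $\theta>0$, $\lambda>0$, $\mu>0$ with $\lambda<\mu+1$. For $\alpha\ge 0$, $d\ge 0$ let $$\pi(\alpha,d)=(\theta+\mu)\alpha-\frac{\alpha^2}{2}-\frac{\alpha}{\alpha+d}\,\lambda\alpha\theta-d ,$$ let $\Pi(\alpha;\theta)=\max_{d\ge0}\pi(\alpha,d)$ for $\alpha>0$, and let $\alpha^*(\theta)$ be the maximizer of $\Pi(\cdot;\theta)$ over $\alpha>0$, namely $\alpha^*(\theta)=\mu+\theta(1-\lambda)$ if $\lambda\theta\le1$ and $\alpha^*(\theta)=\theta+\mu+1-2\sqrt{\lambda\theta}$ if $\lambda\theta>1$. Let $\alpha^0=\theta+\mu$ and $\Delta(\theta)=\alpha^0-\alpha^*(\theta)$. Then $$\Delta(\theta)=\begin{cases}\lambda\theta, & \lambda\theta\le 1,\\ 2\sqrt{\lambda\theta}-1, & \lambda\theta>1.\end{cases}$$ Moreover, $\Delta$ is continuously differentiable in $\theta$ at $\theta=1/\lambda$, is increasing in $\lambda$ and in $\theta$, and does not depend on $\mu$.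
   Context: $\alpha$ is AI deployment, $d$ security investment, $\theta$ AI capability, $\lambda$ breach-loss magnitude, $\mu$ organizational readiness. Breach probability is $\alpha/(\alpha+d)$ and breach damage $\lambda\alpha\theta$. $\alpha^0=\theta+\mu$ is the deployment that maximizes $(\theta+\mu)\alpha-\alpha^2/2$ (no-risk benchmark); $\Delta$ is called the security discount. *)

From Stdlib Require Import Reals Lra.
From Coquelicot Require Import Coquelicot.
Open Scope R_scope.

(* Recorded for context; alpha* below is the
   closed-form maximizer stated in the paper ("namely ..."). *)
Definition payoff (theta lam mu alpha d : R) : R :=
  (theta + mu) * alpha - alpha ^ 2 / 2
  - alpha / (alpha + d) * (lam * alpha * theta) - d.

Definition alpha_star (lam mu theta : R) : R :=
  if Rle_dec (lam * theta) 1 then mu + theta * (1 - lam)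
  else theta + mu + 1 - 2 * sqrt (lam * theta).

Definition alpha0 (mu theta : R) : R := theta + mu.

Definition security_discount (lam mu theta : R) : R := alpha0 mu theta - alpha_star lam mu theta.

From Stdlib Require Import Reals Lra.
From Coquelicot Require Import Coquelicot.
Open Scope R_scope.

(* The security discount depends on the parameters only through the exposure
   x = lam * theta: it equals g x, where g x = x for x <= 1 and
   g x = 2 sqrt x - 1 beyond. Both branches of g are strictly increasing and
   meet at x = 1 with value 1 and slope 1, so g is strictly increasing and
   continuously differentiable, with g' x = 1 / sqrt (max 1 x). Monotonicity
   in lam and theta, independence of mu and the C^1 property at
   theta = 1 / lam then follow by composing with x = lam * theta. *)

Definition discount_profile (x : R) : R :=
  if Rle_dec x 1 then x else 2 * sqrt x - 1.

Definition discount_profile_derive (x : R) : R := / sqrt (Rmax 1 x).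

Lemma security_discount_profile lam mu theta :
  security_discount lam mu theta = discount_profile (lam * theta).
Proof.
unfold security_discount, alpha0, alpha_star, discount_profile.
destruct (Rle_dec (lam * theta) 1); ring.
Qed.

Lemma discount_profile_lt x y : x < y -> discount_profile x < discount_profile y.
Proof.
intros Hxy; unfold discount_profile.
destruct (Rle_dec x 1), (Rle_dec y 1); try lra.
- assert (1 < sqrt y) by (rewrite <- sqrt_1; apply sqrt_lt_1; lra); lra.
- assert (sqrt x < sqrt y) by (apply sqrt_lt_1; lra); lra.
Qed.

Lemma is_derive_glue (f g : R -> R) (c l : R) :
  f c = g c -> is_derive f c l -> is_derive g c l ->
  is_derive (fun x => if Rle_dec x c then f x else g x) c l.
Proof.
rewrite !is_derive_Reals; intros Hc Hf Hg eps Heps.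
destruct (Hf eps Heps) as [d1 Hd1], (Hg eps Heps) as [d2 Hd2].
exists (mkposreal _ (Rmin_pos _ _ (cond_pos d1) (cond_pos d2))); simpl.
intros h Hh0 Hh.
destruct (Rle_dec c c) as [_ | Hcc]; [| lra].
destruct (Rle_dec (c + h) c).
- apply Hd1; [exact Hh0 | exact (Rlt_le_trans _ _ _ Hh (Rmin_l _ _))].
- rewrite Hc; apply Hd2; [exact Hh0 | exact (Rlt_le_trans _ _ _ Hh (Rmin_r _ _))].
Qed.

Lemma is_derive_sqrt_branch x :
  0 < x -> is_derive (fun y => 2 * sqrt y - 1) x (/ sqrt x).
Proof.
intros Hx; assert (Hsx : 0 < sqrt x) by (apply sqrt_lt_R0; exact Hx).
auto_derive; [exact Hx | field; lra].
Qed.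

Lemma is_derive_discount_profile x :
  is_derive discount_profile x (discount_profile_derive x).
Proof.
unfold discount_profile_derive.
destruct (Rtotal_order x 1) as [Hx | [Hx | Hx]].
- rewrite Rmax_left, sqrt_1, Rinv_1 by lra.
  apply is_derive_ext_loc with (fun y => y).
  + apply (filter_imp (fun y => y < 1)); [| exact (open_lt 1 x Hx)].
    intros y Hy; unfold discount_profile; destruct (Rle_dec y 1); lra.
  + auto_derive; reflexivity.
- subst x; rewrite Rmax_left, sqrt_1, Rinv_1 by lra.
  apply is_derive_glue.
  + rewrite sqrt_1; ring.
  + auto_derive; reflexivity.
  + pose proof (is_derive_sqrt_branch 1 Rlt_0_1) as Hsqrt.
    rewrite sqrt_1, Rinv_1 in Hsqrt; exact Hsqrt.
- rewrite Rmax_right by lra.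
  apply is_derive_ext_loc with (fun y => 2 * sqrt y - 1).
  + apply (filter_imp (fun y => 1 < y)); [| exact (open_gt 1 x Hx)].
    intros y Hy; unfold discount_profile; destruct (Rle_dec y 1); lra.
  + apply is_derive_sqrt_branch; lra.
Qed.

Lemma continuous_Rmax a x : continuous (Rmax a) x.
Proof.
apply continuous_ext with (fun y => (a + y + Rabs (y - a)) * / 2).
- intros y; unfold Rmax; destruct (Rle_dec a y);
    [rewrite Rabs_right | rewrite Rabs_left]; lra.
- apply (continuous_mult (fun y => a + y + Rabs (y - a)) (fun _ => / 2));
    [| apply continuous_const].
  apply (continuous_plus (fun y => a + y) (fun y => Rabs (y - a))).
  + apply (continuous_plus (fun _ => a) (fun y => y));
      [apply continuous_const | apply continuous_id].
  + apply continuous_Rabs_comp, (continuous_minus (fun y => y) (fun _ => a));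
      [apply continuous_id | apply continuous_const].
Qed.

Lemma continuous_discount_profile_derive x :
  continuous discount_profile_derive x.
Proof.
assert (0 < sqrt (Rmax 1 x)) by (apply sqrt_lt_R0; generalize (Rmax_l 1 x); lra).
apply continuous_Rinv_comp; [| lra].
apply continuous_sqrt_comp, continuous_Rmax.
Qed.

Lemma is_derive_security_discount lam mu t :
  is_derive (security_discount lam mu) t
    (lam * discount_profile_derive (lam * t)).
Proof.
apply is_derive_ext with (fun s => discount_profile (lam * s)).
- intros s; symmetry; apply security_discount_profile.
- apply (is_derive_comp discount_profile (fun s => lam * s)).
  + apply is_derive_discount_profile.
  + auto_derive; [exact I | ring].
Qed.

Lemma continuous_Derive_security_discount lam mu t :
  continuous (Derive (security_discount lam mu)) t.
Proof.
apply continuous_ext with (fun s => lam * discount_profile_derive (lam * s)).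
- intros s; symmetry; apply is_derive_unique, is_derive_security_discount.
- apply (continuous_mult (fun _ => lam)); [apply continuous_const |].
  apply (continuous_comp (fun s => lam * s)); [| apply continuous_discount_profile_derive].
  apply (continuous_mult (fun _ => lam) (fun s => s));
    [apply continuous_const | apply continuous_id].
Qed.

Theorem proposition2 (theta lam mu : R)
  (Htheta : 0 < theta) (Hlam : 0 < lam) (Hmu : 0 < mu) (Hlm : lam < mu + 1) :
  (* closed form of the security discount *)
  security_discount lam mu theta =
    (if Rle_dec (lam * theta) 1 then lam * theta
     else 2 * sqrt (lam * theta) - 1)
  (* continuously differentiable in theta at theta = 1/lam *)
  /\ (exists eps : R, 0 < eps /\
        forall t : R, Rabs (t - / lam) < eps -> ex_derive (security_discount lam mu) t)
  /\ continuous (Derive (security_discount lam mu)) (/ lam)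
  (* increasing in lam (over the admissible range 0 < lam < mu + 1) *)
  /\ (forall l1 l2 : R, 0 < l1 -> l1 < l2 -> l2 < mu + 1 ->
        security_discount l1 mu theta < security_discount l2 mu theta)
  (* increasing in theta (over theta > 0) *)
  /\ (forall t1 t2 : R, 0 < t1 -> t1 < t2 ->
        security_discount lam mu t1 < security_discount lam mu t2)
  (* independent of mu (over admissible mu) *)
  /\ (forall mu' : R, 0 < mu' -> lam < mu' + 1 ->
        security_discount lam mu' theta = security_discount lam mu theta).
Proof.
split; [apply security_discount_profile |].
split.
{ exists 1; split; [lra |].
  intros t _; eexists; apply is_derive_security_discount. }
split; [apply continuous_Derive_security_discount |].
split.
{ intros l1 l2 _ Hl _; rewrite !security_discount_profile.
  apply discount_profile_lt, Rmult_lt_compat_r; assumption. }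
split.
{ intros t1 t2 _ Ht; rewrite !security_discount_profile.
  apply discount_profile_lt, Rmult_lt_compat_l; assumption. }
intros mu' _ _; rewrite !security_discount_profile; reflexivity.
Qed.
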